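(* Let $P$ be a profile of linear orders on a finite set $A$ which is single-crossing with respect to some tree on its voter set. Then every subprofile of $P$ is single-crossing with respect to some tree on its own voter set if and only if $P$ is single-crossing with respect to a line (a path graph on the voter set).
   Context: A profile assigns a linear order on $A$ to each voter in a finite voter set; a subprofile is the restriction of the profile to a nonempty subset of voters. Voter $i$ prefers $a$ to $b$ is written $a\succ_i b$. Given a tree $T=(V,E)$ on the voter set, the profile is single-crossing with respect to $T$ if for every pair of distinct alternatives $a,b$ one of the following holds: (i) there is an edge $e\in E$ such that, removing $e$ from $T$, the two resulting subtrees have vertex sets $V_1,V_2$ with all voters in $V_1$ preferring $a$ to $b$ and all voters in $V_2$ preferring $b$ to $a$; or (ii) all voters prefer $a$ to $b$, or all voters prefer $b$ to $a$. *)

From mathcomp Require Import all_boot.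
Set Implicit Arguments. Unset Strict Implicit. Unset Printing Implicit Defensive.

(* A strict linear order on A: pref a b means "a is preferred to b". *)
Definition strict_linear_order (A : finType) (pref : rel A) : Prop :=
  [/\ forall a, ~~ pref a a,
      forall a b c, pref a b -> pref b c -> pref a c &
      forall a b, a != b -> pref a b || pref b a].

Section Graphs.
Variable V : finType.

Definition adj (E : {set {set V}}) : rel V :=
  fun x y => (x != y) && ([set x; y] \in E).

Definition edges_in (S : {set V}) (E : {set {set V}}) : Prop :=
  forall e, e \in E -> exists x y, [/\ x \in S, y \in S, x != y & e = [set x; y]].

Definition connected_on (S : {set V}) (E : {set {set V}}) : Prop :=
  forall x y, x \in S -> y \in S -> connect (adj E) x y.

Definition acyclic (E : {set {set V}}) : Prop :=
  ~ exists (x : V) (p : seq V),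
      [/\ uniq (x :: p), 2 <= size p, path (adj E) x p & adj E (last x p) x].

Definition is_tree (S : {set V}) (E : {set {set V}}) : Prop :=
  [/\ edges_in S E, connected_on S E & acyclic E].

Definition is_path_graph (S : {set V}) (E : {set {set V}}) : Prop :=
  exists s : seq V,
    [/\ uniq s, (forall x, (x \in s) = (x \in S)) &
        E = [set [set p.1; p.2] | p in zip s (behead s)]].

End Graphs.

Definition single_crossing (V A : finType) (P : V -> rel A)
    (S : {set V}) (E : {set {set V}}) : Prop :=
  forall a b : A, a != b ->
    (exists e, e \in E /\ exists u v : V, [/\ u != v, e = [set u; v] &
        forall x, x \in S ->
          (connect (adj (E :\ e)) u x -> P x a b) /\
          (connect (adj (E :\ e)) v x -> P x b a)])
    \/ (forall x, x \in S -> P x a b)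
    \/ (forall x, x \in S -> P x b a).

From mathcomp Require Import all_boot zify.
Set Implicit Arguments. Unset Strict Implicit. Unset Printing Implicit Defensive.

(* Say that voter y lies between x and z if y agrees with x and z on every
   pair of alternatives on which they agree. A profile single-crossing on a
   tree realizes every contested pair by an edge cut, so no two pairs can split
   four voters as {p,q}|{r,w} and as {p,r}|{q,w}. If every subprofile is
   single-crossing on a tree, then in every triple some voter lies between the
   other two: otherwise each of the three voters is cut off by a pendant edge,
   and three pendant edges on three vertices coincide or form a triangle.
   Conversely a line gives this betweenness property on every subset. Given it,
   take a diameter r, t of the disagreement distance: every voter lies between
   r and t, and sorting by distance to r orders the voters so that each lies
   between any two around it (a violation would produce two crossing splits).
   Such an order is exactly a line on which the profile is single-crossing. *)

Section Graphs.
Variable V : finType.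
Implicit Types (E : {set {set V}}) (S : {set V}) (e : {set V}) (s : seq V).

Lemma connect_invariant (r : rel V) (Q : V -> Prop) x y :
  (forall a b, Q a -> r a b -> Q b) -> Q x -> connect r x y -> Q y.
Proof.
move=> HQ Qx /connectP [p + ->] {y}.
by elim: p x Qx => [|z p IH] x Qx //= /andP [/(HQ _ _ Qx) /IH].
Qed.

Lemma adj_sym E : symmetric (adj E).
Proof. by move=> x y; rewrite /adj eq_sym setUC. Qed.

Lemma connect_adj_sym E : connect_sym (adj E).
Proof. exact/sym_connect_sym/adj_sym. Qed.

Lemma eq_set2 (x y a b : V) : x != y -> [set x; y] = [set a; b] ->
  (x = a /\ y = b) \/ (x = b /\ y = a).
Proof.
move=> nxy exy.
have /set2P xab : x \in [set a; b] by rewrite -exy set21.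
have /set2P yab : y \in [set a; b] by rewrite -exy set22.
by case: xab yab nxy => -> [] ->; rewrite ?eqxx // => _; [left | right].
Qed.

Lemma connect_setD1_edge E u v z : connect (adj E) u z ->
  connect (adj (E :\ [set u; v])) u z || connect (adj (E :\ [set u; v])) v z.
Proof.
set K := connect (adj (E :\ [set u; v])).
apply: (connect_invariant (Q := fun z => K u z || K v z)); last by rewrite /K connect0.
move=> a b Ka /andP [nab abE].
have [eab | neab] := eqVneq [set a; b] [set u; v].
  have : b \in [set u; v] by rewrite -eab set22.
  by case/set2P => ->; rewrite /K connect0 ?orbT.
have Fab : adj (E :\ [set u; v]) a b by rewrite /adj nab !inE neab.
by case/orP: Ka => Kta; apply/orP; [left | right]; exact: connect_trans Kta (connect1 Fab).
Qed.

Lemma connect_setD1_avoid E e e' y z :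
  (forall w, connect (adj (E :\ e)) y w -> w \notin e') ->
  connect (adj (E :\ e)) y z -> connect (adj (E :\ e')) y z.
Proof.
move=> avoid Kyz.
set K := connect (adj (E :\ e)); set K' := connect (adj (E :\ e')).
suff [] : K y z /\ K' y z by [].
apply: (connect_invariant (Q := fun w => K y w /\ K' y w) _ _ Kyz).
  move=> a b [Ka K'a] /andP [nab]; rewrite !inE => /andP [neab abE].
  split; first by apply: connect_trans Ka (connect1 _); rewrite /adj nab !inE neab.
  apply: connect_trans K'a (connect1 _); rewrite /adj nab !inE abE andbT.
  by apply: contraNneq (avoid _ Ka) => <-; rewrite set21.
by rewrite /K /K' !connect0.
Qed.

Lemma connect_setD1_swap E e u v y z :
  [set u; v] \in E -> u != v -> [set u; v] != e ->
  ~~ connect (adj (E :\ e)) y u ->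
  connect (adj (E :\ e)) y z -> connect (adj (E :\ [set u; v])) y z.
Proof.
move=> uvE nuv nuve nKyu; apply: connect_setD1_avoid => w Kyw.
apply/set2P => -[ewu | ewv]; apply: (negP nKyu); first by rewrite -ewu.
apply: connect_trans Kyw (connect1 _).
by rewrite ewv /adj eq_sym nuv setUC !inE nuve.
Qed.

Lemma connect_cut_sides S E u v (Q : pred V) :
  connected_on S E -> u \in S ->
  (forall y, y \in S -> connect (adj (E :\ [set u; v])) u y -> Q y) ->
  (forall y, y \in S -> connect (adj (E :\ [set u; v])) v y -> ~~ Q y) ->
  {in S &, forall y y', connect (adj (E :\ [set u; v])) y y' = (Q y == Q y')}.
Proof.
move=> conn uS Ku Kv.
set K := connect (adj (E :\ [set u; v])).
have cover y : y \in S -> K u y || K v y by move=> yS; exact/connect_setD1_edge/conn.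
have KuE y : y \in S -> K u y = Q y.
  move=> yS; case: (boolP (K u y)) => [/(Ku _ yS) -> //|nKuy].
  by move: (cover _ yS); rewrite (negbTE nKuy) => /(Kv _ yS)/negbTE ->.
have KvE y : y \in S -> K v y = ~~ Q y.
  move=> yS; case: (boolP (K v y)) => [/(Kv _ yS) -> // | nKvy].
  by move: (cover _ yS); rewrite (negbTE nKvy) orbF KuE // => ->.
move=> y y' yS y'S; have Ksym := same_connect (connect_adj_sym (E :\ [set u; v])).
case/orP: (cover _ yS) => Ky; rewrite /K -(Ksym _ _ Ky) -/K.
  by move: Ky; rewrite !KuE // => ->.
by move: Ky; rewrite !KvE // => /negbTE ->; case: (Q y').
Qed.

Lemma acyclic_triangle E x y z : acyclic E ->
  [set x; y] \in E -> [set y; z] \in E -> [set z; x] \in E ->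
  x != y -> y != z -> z != x -> False.
Proof.
move=> acyc xyE yzE zxE nxy nyz nzx; apply: acyc; exists x, [:: y; z].
by rewrite /= /adj !inE negb_or nxy nyz nzx xyE yzE zxE eq_sym nzx.
Qed.

Definition path_edges s : {set {set V}} :=
  [set [set p.1; p.2] | p in zip s (behead s)].

Lemma mem_zip_behead s a b : uniq s -> (a, b) \in zip s (behead s) ->
  [/\ a \in s, b \in s & index b s = (index a s).+1].
Proof.
elim: s => [|x [|y s] IH] //= /andP [nx us]; rewrite inE => /orP [/eqP [-> ->]|abs].
  by move: nx; rewrite !inE negb_or => /andP [nxy _]; rewrite !eqxx (negbTE nxy) !orbT.
have [ays bys iab] := IH us abs.
have [nxa nxb] : x != a /\ x != b by split; apply: contraNneq nx => ->.
move: ays bys iab => /=; rewrite !inE => -> -> ->.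
by rewrite (negbTE nxa) (negbTE nxb) !orbT.
Qed.

Lemma adj_path_edges s y z : uniq s -> adj (path_edges s) y z ->
  [/\ y \in s, z \in s & index z s = (index y s).+1 \/ index y s = (index z s).+1].
Proof.
move=> us /andP [nyz /imsetP [[a b] /(mem_zip_behead us) [ais bis iab] eyz]].
by case: (eq_set2 nyz eyz) => -[-> ->]; split => //; [left | right].
Qed.

Lemma adj_path_edges_nth x0 s i : uniq s -> i.+1 < size s ->
  adj (path_edges s) (nth x0 s i) (nth x0 s i.+1).
Proof.
move=> us lti; rewrite /adj nth_uniq ?(ltnW lti) // eqn_leq ltnn andbF /=.
have ltiz : i < size (zip s (behead s)) by rewrite size_zip size_behead; lia.
apply/imsetP; exists (nth (x0, x0) (zip s (behead s)) i); first exact: mem_nth.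
by rewrite nth_zip_cond ltiz /= nth_behead.
Qed.

Lemma connect_path_edges s x y : uniq s -> x \in s -> y \in s ->
  connect (adj (path_edges s)) x y.
Proof.
move=> us xs ys.
have from0 i : i < size s -> connect (adj (path_edges s)) (nth x s 0) (nth x s i).
  elim: i => [|i IH] lti; first exact: connect0.
  exact: connect_trans (IH (ltnW lti)) (connect1 (adj_path_edges_nth x us lti)).
have := from0 _ (etrans (index_mem x s) xs); have := from0 _ (etrans (index_mem y s) ys).
rewrite !nth_index // => K0y K0x.
by apply: connect_trans _ K0y; rewrite connect_adj_sym.
Qed.

(* The vertex of largest index on a cycle would have two distinct neighbours,
   both of index one less. *)
Lemma path_edges_acyclic s : uniq s -> acyclic (path_edges s).
Proof.
move=> us [x [p [up sp pp lp]]].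
case: (@arg_maxnP V x (mem (x :: p)) (index^~ s) (mem_head x p)) => m mc mmax.
have below y : y \in x :: p -> adj (path_edges s) m y -> index m s = (index y s).+1.
  move=> yc /(adj_path_edges us) [_ _ [imy | //]].
  by have := mmax y yc; rewrite /= imy ltnn.
case: (rot_to mc) => i q erot.
have : cycle (adj (path_edges s)) (m :: q) by rewrite -erot rot_cycle /= rcons_path pp lp.
have : uniq (m :: q) by rewrite -erot rot_uniq.
have inc y : y \in m :: q -> y \in x :: p by rewrite -erot mem_rot.
have : 2 <= size q by rewrite -ltnS -[(size q).+1]/(size (m :: q)) -erot size_rot.
case: q erot inc => [|y1 [|y2 q]] // _ inc _ /and3P [_ ny1 _].
rewrite /cycle rcons_path => /andP [/andP [my1 _] lm].
have ml : adj (path_edges s) m (last y2 q) by rewrite adj_sym.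
have y1s : y1 \in s by case: (adj_path_edges us my1).
have ls : last y2 q \in s by case: (adj_path_edges us ml).
have /eqP : y1 != last y2 q by apply: contraNneq ny1 => ->; exact: mem_last.
apply; apply: (index_inj y1 y1s ls); apply/succn_inj.
have lc : last y2 q \in [:: m, y1, y2 & q] by rewrite inE [_ \in y1 :: _]inE mem_last !orbT.
by rewrite -(below _ _ my1) ?(below _ _ ml) ?inc // !inE eqxx orbT.
Qed.

Lemma path_edges_tree S s : uniq s -> s =i S -> is_tree S (path_edges s).
Proof.
move=> us sS; split; last exact: path_edges_acyclic.
- move=> e /imsetP [[a b] /(mem_zip_behead us) [ais bis iab] ->].
  by exists a, b; split; rewrite -?sS //; apply/eqP => eab; move: iab; rewrite eab; lia.
- by move=> x y; rewrite -!sS; exact: connect_path_edges.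
Qed.

Lemma path_edges_cut S s a b : uniq s -> s =i S -> a \in s -> b \in s ->
  index b s = (index a s).+1 ->
  {in S &, forall x y, connect (adj (path_edges s :\ [set a; b])) x y =
                        ((index x s <= index a s) == (index y s <= index a s))}.
Proof.
move=> us sS ais bis iab; set side := fun y => index y s <= index a s.
have step y z : adj (path_edges s :\ [set a; b]) y z -> side z = side y.
  move=> /andP [nyz]; rewrite !inE => /andP [neab yzE].
  have /(adj_path_edges us) [ys zs [iz | iy]] : adj (path_edges s) y z by rewrite /adj nyz.
    have [ya | nya] := eqVneq (index y s) (index a s).
      have zb : index z s = index b s by rewrite iz ya iab.
      by move: neab; rewrite (index_inj a ys ais ya) (index_inj a zs bis zb) eqxx.
    by rewrite /side iz; case: leqP; case: leqP => //; lia.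
  have [za | nza] := eqVneq (index z s) (index a s).
    have yb : index y s = index b s by rewrite iy za iab.
    by move: neab; rewrite (index_inj a zs ais za) (index_inj a ys bis yb) setUC eqxx.
  by rewrite /side iy; case: leqP; case: leqP => //; lia.
have stay y z : connect (adj (path_edges s :\ [set a; b])) y z -> side z = side y.
  by apply: (connect_invariant (Q := fun z => side z = side y)) => // ? ? <- /step.
have [_ conn _] := path_edges_tree us sS.
apply: (connect_cut_sides (Q := side) conn); first by rewrite -sS.
  by move=> y _ /stay ->; rewrite /side leqnn.
by move=> y _ /stay ->; rewrite /side iab ltnn.
Qed.

End Graphs.

Lemma nonconstant_bool_step (f : nat -> bool) n i j : i < n -> j < n -> f i != f j ->
  exists2 m, m.+1 < n & f m != f m.+1.
Proof.
suff step k : k < n -> f k != f 0 -> exists2 m, m.+1 < n & f m != f m.+1.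
  move=> ltin ltjn nij; have [fi0 | ] := eqVneq (f i) (f 0); last exact: step.
  by apply: (step j ltjn); rewrite -fi0 eq_sym.
elim: k => [|k IH] ltkn; first by rewrite eqxx.
have [fk0 fSk0 | /(IH (ltnW ltkn)) //] := eqVneq (f k) (f 0).
by exists k; rewrite // fk0 eq_sym.
Qed.

Section Profiles.
Variables (V A : finType) (P : V -> rel A).
Hypothesis HP : forall i, strict_linear_order (P i).
Implicit Types (x y z : V) (c : A * A) (S : {set V}) (E : {set {set V}}) (s : seq V).

Lemma pref_irr i a : P i a a = false.
Proof. by case: (HP i) => irr _ _; exact/negbTE. Qed.

Lemma pref_asym i a b : P i a b -> P i b a = false.
Proof.
case: (HP i) => irr tr _ ab; apply/negP => /(tr _ _ _ ab).
by rewrite pref_irr.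
Qed.

Lemma pref_swap i a b : a != b -> P i b a = ~~ P i a b.
Proof.
move=> nab; case ab: (P i a b); first exact: pref_asym.
by case: (HP i) => _ _ /(_ a b nab); rewrite ab.
Qed.

Definition agree x y c := P x c.1 c.2 == P y c.1 c.2.

Lemma agreeC x y c : agree x y c = agree y x c.
Proof. exact: eq_sym. Qed.

Definition between x y z := [forall c, agree x z c ==> agree x y c].

Lemma betweenP x y z : reflect (forall c, agree x z c -> agree x y c) (between x y z).
Proof. by apply: (iffP forallP) => h c; apply/implyP/h. Qed.

Lemma between_refl_l x z : between x x z.
Proof. by apply/betweenP => c _; exact: eqxx. Qed.

Lemma between_refl_r x z : between x z z.
Proof. exact/betweenP. Qed.

Lemma between_sym x y z : between x y z -> between z y x.
Proof.
move/betweenP => h; apply/betweenP => c; move: (h c); rewrite /agree.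
by case: (P x _ _); case: (P y _ _); case: (P z _ _); auto.
Qed.

Lemma between_agree_l x y z c : between x y z -> ~~ agree y z c -> agree x y c.
Proof.
move/betweenP/(_ c); rewrite /agree.
by case: (P x _ _); case: (P y _ _); case: (P z _ _); auto.
Qed.

Lemma between_agree_r x y z c : between x y z -> ~~ agree x y c -> agree y z c.
Proof.
move/betweenP/(_ c); rewrite /agree.
by case: (P x _ _); case: (P y _ _); case: (P z _ _); auto.
Qed.

(* Twice the Kendall tau distance: a discordant pair is counted in both orders. *)
Definition dist x y := \sum_c ~~ agree x y c.

Lemma distC x y : dist x y = dist y x.
Proof. by apply: eq_bigr => c _; rewrite agreeC. Qed.

Lemma between_dist x y z : between x y z = (dist x z == dist x y + dist y z).
Proof.
rewrite /dist -big_split /= (leqif_sum (C := fun c => agree x z c ==> agree x y c) _).2 //.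
by move=> c _; rewrite /agree; case: (P x _ _); case: (P y _ _); case: (P z _ _).
Qed.

Lemma dist_gt0 x y : 0 < dist x y -> exists c, ~~ agree x y c.
Proof. by rewrite lt0n sum_nat_eq0 negb_forall => /existsP [c]; rewrite eqb0 negbK; exists c. Qed.

Definition collinear S :=
  {in S & &, forall x y z, [|| between x y z, between y x z | between x z y]}.

Definition between_ordered s :=
  {in s & &, forall x y z, index x s <= index y s <= index z s -> between x y z}.

Lemma between_ordered_collinear S s : between_ordered s -> {subset S <= s} -> collinear S.
Proof.
move=> ord sub x y z /sub xs /sub ys /sub zs.
have mid u v w : u \in s -> v \in s -> w \in s ->
    (index u s <= index v s <= index w s) || (index w s <= index v s <= index u s) ->
    between u v w.
  by move=> us vs ws /orP [] ?; [exact: ord | exact/between_sym/ord].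
have : [|| (index x s <= index y s <= index z s) || (index z s <= index y s <= index x s),
           (index y s <= index x s <= index z s) || (index z s <= index x s <= index y s) |
           (index x s <= index z s <= index y s) || (index y s <= index z s <= index x s)].
  by lia.
case/or3P => h; first by rewrite mid.
  by rewrite (mid y x z) ?orbT.
by rewrite (mid x z y) ?orbT.
Qed.

Definition separates c p q r w := [&& agree p q c, agree r w c & ~~ agree p r c].

Definition compatible_splits :=
  forall c c' p q r w, separates c p q r w -> ~~ separates c' p r q w.

Lemma diameter_between S r t : collinear S -> r \in S -> t \in S ->
  {in S &, forall x y, dist x y <= dist r t} -> {in S, forall x, between r x t}.
Proof.
move=> col rS tS diam x xS.
case/or3P: (col _ _ _ rS xS tS) => //; rewrite !between_dist => /eqP e.
  by have := diam _ _ xS tS; rewrite (distC x r) in e; lia.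
by have := diam _ _ rS xS; rewrite (distC x t); lia.
Qed.

(* A failure would exhibit two crossing splits of [t], [x], [y], [r]. *)
Lemma between_of_dist_le S r t : compatible_splits -> collinear S -> r \in S ->
  {in S, forall x, between r x t} ->
  {in S &, forall x y, dist r x <= dist r y -> between r x y}.
Proof.
move=> compat col rS geod x y xS yS rxy.
case/or3P: (col _ _ _ rS xS yS) => // [bxry | ]; last first.
  by rewrite !between_dist (distC x y) => /eqP e; apply/eqP; lia.
have [rx0 | rxpos] := posnP (dist r x).
  by move: bxry; rewrite !between_dist (distC x r) rx0 => /eqP e; apply/eqP; lia.
have [c1 rxc1] := dist_gt0 rxpos.
have [c2 ryc2] := dist_gt0 (leq_trans rxpos rxy).
move/betweenP: (bxry) => /(_ c1) bxry1; move/between_sym/betweenP: bxry => /(_ c2) byrx2.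
move/betweenP: (geod x xS) => /(_ c1) rxt1; move/betweenP: (geod y yS) => /(_ c2) ryt2.
suff : separates c1 t x y r /\ separates c2 t y x r by case=> /(compat _ c2) /negP.
split.
  move: rxc1 bxry1 rxt1; rewrite /separates /agree.
  by case: (P t _ _); case: (P x _ _); case: (P y _ _); case: (P r _ _); auto.
move: ryc2 byrx2 ryt2; rewrite /separates /agree.
by case: (P t _ _); case: (P x _ _); case: (P y _ _); case: (P r _ _); auto.
Qed.

Lemma collinear_between_ordered S : compatible_splits -> collinear S ->
  exists s, [/\ uniq s, s =i S & between_ordered s].
Proof.
move=> compat col.
have [-> | [r0 r0S]] := set_0Vmem S; first by exists [::]; split => // x; rewrite inE.
case: (@arg_maxnP _ (r0, r0) [pred p | (p.1 \in S) && (p.2 \in S)] (fun p => dist p.1 p.2)).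
  by rewrite /= r0S.
move=> [r t] /andP [/= rS tS] maxd.
have geod := diameter_between col rS tS (fun x y xS yS => maxd (x, y) (introT andP (conj xS yS))).
have near := between_of_dist_le compat col rS geod.
set s := sort (fun x y => dist r x <= dist r y) (enum S).
have sS : s =i S by move=> x; rewrite mem_sort mem_enum.
exists s; split => //; first by rewrite sort_uniq enum_uniq.
have sorted_s : sorted (fun x y => dist r x <= dist r y) s.
  exact: (sort_sorted (fun x y => leq_total _ _)).
have mono : {in s &, forall x y, index x s <= index y s -> dist r x <= dist r y}.
  move=> x y xs ys ixy.
  have := sorted_leq_nth (fun _ _ _ => @leq_trans _ _ _) (fun _ => leqnn _) x sorted_s.
  by move=> /(_ (index x s) (index y s)); rewrite !inE !index_mem !nth_index //; apply.
move=> x y z xs ys zs /andP [ixy iyz]; rewrite between_dist.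
move: (near x y) (near y z) (near x z); rewrite -!sS !between_dist.
move=> /(_ xs ys (mono _ _ xs ys ixy)) /eqP e1 /(_ ys zs (mono _ _ ys zs iyz)) /eqP e2.
by move=> /(_ xs zs (mono _ _ xs zs (leq_trans ixy iyz))) /eqP e3; apply/eqP; lia.
Qed.

Lemma single_crossing_cut S E c x1 x2 : is_tree S E -> single_crossing P S E ->
  x1 \in S -> x2 \in S -> ~~ agree x1 x2 c ->
  exists u v, [/\ [set u; v] \in E, u \in S, v \in S, ~~ agree u v c &
    {in S &, forall y y', connect (adj (E :\ [set u; v])) y y' = agree y y' c}].
Proof.
move=> [edges conn _] sc x1S x2S; case: c => a b; rewrite /agree /= => nx12.
have nab : a != b by apply: contraNneq nx12 => <-; rewrite !pref_irr.
case: (sc a b nab) => [[e [eE [u [v [_ ee sides]]]]] | [] all_ab]; first last.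
- by rewrite !(pref_asym (all_ab _ _)) in nx12.
- by rewrite !all_ab in nx12.
subst e; have [uS vS] : u \in S /\ v \in S.
  have [x [y [xS yS _ exy]]] := edges _ eE.
  by split; [have := set21 u v | have := set22 u v]; rewrite exy => /set2P [] ->.
exists u, v; split => //.
  have [/(_ (connect0 _ _)) Pu _] := sides u uS.
  have [_ /(_ (connect0 _ _)) Pv] := sides v vS.
  by rewrite /= Pu (pref_asym Pv).
apply: (connect_cut_sides (Q := fun y => P y a b)) conn uS _ _.
  by move=> y yS /(proj1 (sides y yS)).
by move=> y yS /(proj2 (sides y yS)) /(pref_asym) ->.
Qed.

(* One side of the cut of [c] avoids the edge of [c'], so it stays connected
   without that edge; yet both sides contain two voters separated by [c']. *)
Lemma tree_compatible_splits E : is_tree [set: V] E -> single_crossing P [set: V] E ->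
  compatible_splits.
Proof.
move=> tree sc c c' p q r w /and3P [pq rw npr]; apply/negP => /and3P [pr' qw' npq'].
have nrw' : ~~ agree r w c' by move: pr' qw' npq'; rewrite /agree; do 4!case: (P _ _ _).
have [u [v [uvE _ _ _ K]]] := single_crossing_cut tree sc (in_setT p) (in_setT r) npr.
have [u' [v' [uvE' _ _ nuv' K']]] := single_crossing_cut tree sc (in_setT p) (in_setT q) npq'.
have {}nuv' : u' != v' by apply: contraNneq nuv' => ->; exact: eqxx.
have Kpq : connect (adj (E :\ [set u; v])) p q by rewrite K ?in_setT.
have Krw : connect (adj (E :\ [set u; v])) r w by rewrite K ?in_setT.
have nKpr : ~~ connect (adj (E :\ [set u; v])) p r by rewrite K ?in_setT.
have nK'pq : ~~ connect (adj (E :\ [set u'; v'])) p q by rewrite K' ?in_setT.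
have nK'rw : ~~ connect (adj (E :\ [set u'; v'])) r w by rewrite K' ?in_setT.
have [e_eq | e_neq] := eqVneq [set u'; v'] [set u; v]; first by rewrite e_eq Kpq in nK'pq.
have [Kpu | nKpu] := boolP (connect (adj (E :\ [set u; v])) p u').
  have nKru : ~~ connect (adj (E :\ [set u; v])) r u'.
    by apply: contraNN nKpr => Kru; apply: (connect_trans Kpu); rewrite connect_adj_sym.
  by rewrite (connect_setD1_swap uvE' nuv' e_neq nKru Krw) in nK'rw.
by rewrite (connect_setD1_swap uvE' nuv' e_neq nKpu Kpq) in nK'pq.
Qed.

Definition pendant_edge S E o t := [set o; t] \in E /\
  {in S &, forall y y', connect (adj (E :\ [set o; t])) y y' = ((y == o) == (y' == o))}.

Lemma pendant_edges_neq S E o o' t t' w :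
  pendant_edge S E o t -> pendant_edge S E o' t' -> o' \in S -> w \in S ->
  o != o' -> w != o -> w != o' -> [set o; t] != [set o'; t'].
Proof.
move=> [_ K] [_ K'] o'S wS noo' nwo nwo'; apply/eqP => e.
move: (K _ _ wS o'S) (K' _ _ wS o'S); rewrite e => ->.
by rewrite (negbTE nwo) (negbTE nwo') eqxx (eq_sym o') (negbTE noo').
Qed.

Lemma single_crossing_pendant S E c o w : is_tree S E -> single_crossing P S E ->
  o \in S -> w \in S -> w != o -> {in S, forall y, y != o -> ~~ agree o y c} ->
  exists t, [/\ t \in S, t != o & pendant_edge S E o t].
Proof.
move=> tree sc oS wS nwo iso.
have [u [v [uvE uS vS nuv K]]] := single_crossing_cut tree sc oS wS (iso w wS nwo).
have isoE : {in S &, forall y y', agree y y' c = ((y == o) == (y' == o))}.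
  move=> y y' yS y'S; have [-> | nyo] := eqVneq y o.
    by have [-> | /(iso _ y'S)] := eqVneq y' o; [rewrite /agree eqxx | move/negbTE].
  have [-> | /(iso _ y'S) ny'o] := eqVneq y' o; first by rewrite agreeC; exact/negbTE/iso.
  by move: (iso _ yS nyo) ny'o; rewrite /agree; do 3!case: (P _ _ _).
have : (u == o) || (v == o).
  by apply: contraR nuv => /norP [nuo nvo]; rewrite isoE // (negbTE nuo) (negbTE nvo).
have nuv_neq : u != v by apply: contraNneq nuv => ->; exact: eqxx.
case/orP => /eqP eo; subst o.
  exists v; split; rewrite 1?eq_sym //.
  by split => // y y' yS y'S; rewrite K // isoE.
exists u; split; rewrite // /pendant_edge setUC.
by split => // y y' yS y'S; rewrite K // isoE.
Qed.

Lemma not_between_isolates x y z : ~~ between x y z ->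
  exists c, ~~ agree y x c && ~~ agree y z c.
Proof.
rewrite negb_forall => /existsP [c]; rewrite negb_imply => xz_xy; exists c.
by move: xz_xy; rewrite /agree; do 3!case: (P _ _ _).
Qed.

Lemma tree_triple_collinear E x y z :
  is_tree [set x; y; z] E -> single_crossing P [set x; y; z] E ->
  [|| between x y z, between y x z | between x z y].
Proof.
move=> tree sc.
have [-> | nxy] := eqVneq x y; first by rewrite between_refl_l.
have [-> | nyz] := eqVneq y z; first by rewrite between_refl_r.
have [-> | nxz] := eqVneq x z; first by rewrite between_refl_r orbT.
have [nyx nzx nzy] : [/\ y != x, z != x & z != y] by split; rewrite eq_sym.
set S := [set x; y; z].
have [xS yS zS] : [/\ x \in S, y \in S & z \in S] by rewrite !inE !eqxx !orbT.
have mem3 w : w \in S -> [|| w == x, w == y | w == z] by rewrite !inE -orbA.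
have pendant o o1 o2 c : (forall w, w \in S -> [|| w == o, w == o1 | w == o2]) ->
    o \in S -> o1 \in S -> o1 != o -> ~~ agree o o1 c -> ~~ agree o o2 c ->
    exists t, [/\ t \in S, t != o & pendant_edge S E o t].
  move=> memS oS o1S no1 n1 n2.
  apply: (single_crossing_pendant (c := c) tree sc oS o1S no1).
  by move=> w /memS /or3P [] /eqP -> => [| _ | _] //; rewrite eqxx.
apply: contraT; rewrite !negb_or => /and3P [].
move=> /not_between_isolates [cy /andP [yx yz]] /not_between_isolates [cx /andP [xy xz]].
move=> /not_between_isolates [cz /andP [zx zy]].
have [tx [/mem3 txS ntx px]] := pendant x y z cx mem3 xS yS nyx xy xz.
have [ty [/mem3 tyS nty py]] : exists t, [/\ t \in S, t != y & pendant_edge S E y t].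
  by apply: (pendant y x z cy) => // w /mem3; rewrite orbCA.
have [tz [/mem3 tzS ntz pz]] : exists t, [/\ t \in S, t != z & pendant_edge S E z t].
  by apply: (pendant z x y cz) => // w /mem3; rewrite (orbC (w == y)) orbCA.
case: tree => _ _ acyc.
move: txS tyS tzS; rewrite (negbTE ntx) (negbTE nty) (negbTE ntz) /= orbF.
case/orP => /eqP etx; case/orP => /eqP ety; case/orP => /eqP etz; subst tx ty tz.
- by have := pendant_edges_neq px py yS zS nxy nzx nzy; rewrite setUC eqxx.
- by have := pendant_edges_neq px py yS zS nxy nzx nzy; rewrite setUC eqxx.
- by case: (acyclic_triangle acyc (proj1 px) (proj1 py) (proj1 pz) nxy nyz nzx).
- by have := pendant_edges_neq py pz zS xS nyz nxy nxz; rewrite setUC eqxx.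
- by have := pendant_edges_neq px pz zS yS nxz nyx nyz; rewrite setUC eqxx.
- by case: (acyclic_triangle acyc (proj1 px) (proj1 pz) (proj1 py) nxz nzy nyx).
- by have := pendant_edges_neq px pz zS yS nxz nyx nyz; rewrite setUC eqxx.
- by have := pendant_edges_neq py pz zS xS nyz nxy nxz; rewrite setUC eqxx.
Qed.

Lemma between_ordered_single_crossing S s : uniq s -> s =i S -> between_ordered s ->
  single_crossing P S (path_edges s).
Proof.
move=> us sS ord a b nab.
have [/forall_inP all_ab | ] := boolP [forall x in S, P x a b]; first by right; left.
have [/forall_inP all_ba | ] := boolP [forall x in S, P x b a]; first by right; right.
rewrite !negb_forall_in => /exists_inP [x2 x2S nx2] /exists_inP [x1 x1S nx1]; left.
pose f i := P (nth x1 s i) a b.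
have [m lt_ms fm] : exists2 m, m.+1 < size s & f m != f m.+1.
  apply: (@nonconstant_bool_step f _ (index x1 s) (index x2 s)); rewrite ?index_mem ?sS //.
  by rewrite /f /= !nth_index ?sS // (negbTE nx1); move: nx2; rewrite pref_swap // negbK => ->.
set u := nth x1 s m; set v := nth x1 s m.+1.
have [u_in v_in] : u \in s /\ v \in s by split; apply: mem_nth; rewrite // ltnW.
have [ium ivm] : index u s = m /\ index v s = m.+1 by rewrite !index_uniq // ltnW.
have nuv : ~~ agree u v (a, b) by [].
have Pside x : x \in S -> P x a b = ((index x s <= m) == P u a b).
  rewrite -sS => xs; have [le_xm | lt_mx] := leqP (index x s) m.
    have xuv : between x u v by apply: ord; rewrite // ium ivm le_xm leqnSn.
    by move/eqP: (between_agree_l xuv nuv) => ->; case: (P u a b).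
  have uvx : between u v x by apply: ord; rewrite // ium ivm leqnSn lt_mx.
  move/eqP: (between_agree_r uvx nuv) => <-.
  by move: nuv; rewrite /agree /=; case: (P u a b); case: (P v a b).
have iuv : index v s = (index u s).+1 by rewrite ium ivm.
have cut := path_edges_cut us sS u_in v_in iuv.
have [uS vS] : u \in S /\ v \in S by rewrite -!sS.
have uvE : [set u; v] \in path_edges s by case/andP: (adj_path_edges_nth x1 us lt_ms).
have nuv_neq : u != v by apply: contraNneq nuv => ->; exact: eqxx.
exists [set u; v]; split => //.
case Pu: (P u a b).
  exists u, v; split => // x xS.
  rewrite !cut // ium ivm leqnn ltnn (pref_swap _ nab) (Pside x xS) Pu.
  by case: (index x s <= m).
exists v, u; split => [| | x xS]; [by rewrite eq_sym | exact: setUC |].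
rewrite !cut // ium ivm leqnn ltnn (pref_swap _ nab) (Pside x xS) Pu.
by case: (index x s <= m).
Qed.

Lemma single_crossing_between_ordered S s : uniq s -> s =i S ->
  single_crossing P S (path_edges s) -> between_ordered s.
Proof.
move=> us sS sc x y z xs ys zs /andP [ixy iyz]; apply/betweenP => c.
have [// | nxy] := boolP (agree x y c); rewrite !sS in xs ys zs.
have [u [v [uvE _ _ _ K]]] := single_crossing_cut (path_edges_tree us sS) sc xs ys nxy.
case/imsetP: uvE => -[p p'] /(mem_zip_behead us) [ps p's ipp'] /= euv.
have cut := path_edges_cut us sS ps p's ipp'.
rewrite euv in K; rewrite -K // cut //; move: nxy; rewrite -K // cut //.
by case: leqP; case: leqP; case: leqP => //; lia.
Qed.

End Profiles.

Theorem theorem5 (V A : finType) (P : V -> rel A)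
  (HP : forall i, strict_linear_order (P i))
  (Htree : exists E, is_tree [set: V] E /\ single_crossing P [set: V] E) :
  (forall S : {set V}, S != set0 ->
     exists E, is_tree S E /\ single_crossing P S E)
  <->
  (exists E, is_path_graph [set: V] E /\ single_crossing P [set: V] E).
Proof.
have compat : compatible_splits P.
  by case: Htree => E [tree sc]; exact: tree_compatible_splits tree sc.
split => [subtrees | [_ [[s [us sV ->]] sc]]].
  have col : collinear P [set: V].
    move=> x y z _ _ _; have /subtrees [E [tree sc]] : [set x; y; z] != set0.
      by apply/set0Pn; exists x; rewrite !inE eqxx.
    exact: tree_triple_collinear tree sc.
  have [s [us sV ord]] := collinear_between_ordered compat col.
  exists (path_edges s); split; first by exists s.
  exact: between_ordered_single_crossing.
move=> S _; have ord := single_crossing_between_ordered HP us sV sc.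
have col : collinear P S by apply: between_ordered_collinear ord _ => x _; rewrite sV in_setT.
have [s' [us' s'S ord']] := collinear_between_ordered compat col.
exists (path_edges s'); split; first exact: path_edges_tree.
exact: between_ordered_single_crossing.
Qed.
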